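(* Consider the setting and SCSG algorithm described in the context, with $\hat A$ nonsingular and $\hat C$ positive definite, and step size $0\le\sigma_\theta\le\frac{\lambda_{\min}}{6\kappa(Q)^2L_G^2}$ (with $\sigma_\omega=\beta\sigma_\theta$). Then for every epoch index $m$, $$\mathbb{E}\|Q^{-1}\Delta_m\|^2=\mathbb{E}\|Q^{-1}\Delta_{m-1,K_{m-1}}\|^2<\infty\ (m\ge1),\qquad\text{i.e. } \mathbb{E}\|Q^{-1}(z_m-z^\star)\|^2<\infty,$$ where the expectation includes the randomness of the geometrically distributed inner-loop lengths.
   Context: Data: $n$ transitions $(s_t,a_t,r_t,s_{t+1})$, $t\in[n]=\{1,\dots,n\}$, a feature map $\phi$ from states to $\mathbb{R}^d$ and a discount factor $\gamma$. Define $\hat A_t=\phi(s_t)(\phi(s_t)-\gamma\phi(s_{t+1}))^\top$, $\hat b_t=r_t\phi(s_t)$, $\hat C_t=\phi(s_t)\phi(s_t)^\top$, and $\hat A,\hat b,\hat C$ their averages over $t\in[n]$; then $(\theta^\star,\omega^\star)=(\hat A^{-1}\hat b,0)$. Let $\beta=\frac{8\lambda_{\max}(\hat A^\top\hat C^{-1}\hat A)}{\lambda_{\min}(\hat C)}$. For $t\in[n]$ set $G_t=\begin{pmatrix}0&-\sqrt\beta\hat A_t^\top\\ \sqrt\beta\hat A_t&\beta\hat C_t\end{pmatrix}$, $g_t=\begin{pmatrix}0\\ \sqrt\beta\hat b_t\end{pmatrix}$, $G=\frac1n\sum_tG_t$, $g=\frac1n\sum_tg_t$, $z^\star=(\theta^\star,\omega^\star/\sqrt\beta)$.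 With this $\beta$, $G$ is diagonalizable with real positive eigenvalues; fix $G=Q\Lambda Q^{-1}$ with $\Lambda$ diagonal. $\lambda_{\min}$ is the smallest eigenvalue of $G$; $\|\cdot\|$ is the Euclidean/spectral norm; $\kappa(Q)=\|Q\|\|Q^{-1}\|$; $L_G^2=\left\|\frac1n\sum_tG_t^\top G_t\right\|$. SCSG (in coordinates $z=(\theta,\omega/\sqrt\beta)$, fixed batch size $B$, deterministic initial point $z_0$): at the start of epoch $m$ the iterate is $z_m$. A subset $\mathcal B\subseteq[n]$ of size $B$ is sampled uniformly at random; $G_m=\frac1B\sum_{t\in\mathcal B}G_t$, $g_m=\frac1B\sum_{t\in\mathcal B}g_t$. Draw $K_m\sim\mathrm{Geom}(\frac B{B+1})$, i.e. $P(K_m=k)=(1-\gamma)\gamma^k$ for $k\ge0$ with $\gamma=\frac B{B+1}$. Set $z_{m,0}=z_m$; for $j=0,\dots,K_m-1$ sample $t_j$ uniformly from $[n]$ independently and set $z_{m,j+1}=z_{m,j}-\sigma_\theta\big(G_{t_j}z_{m,j}+(G_m-G_{t_j})z_m-g_m\big)$; then $z_{m+1}=z_{m,K_m}$. Define $\Delta_m=z_m-z^\star$ and $\Delta_{m,j}=z_{m,j}-z^\star$. *)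

From HB Require Import structures.
From mathcomp Require Import all_boot all_order all_algebra.
From mathcomp Require Import boolp classical_sets reals ereal sequences.
Set Implicit Arguments. Unset Strict Implicit. Unset Printing Implicit Defensive.
Import Order.TTheory GRing.Theory Num.Theory.
Local Open Scope ring_scope.
Local Open Scope classical_set_scope.

Section SCSGdefs.
Variable R : realType.

Definition vnorm (k : nat) (v : 'cV[R]_k) : R :=
  Num.sqrt (\sum_(i < k) (v i 0) ^+ 2).

Definition specnorm (k : nat) (M : 'M[R]_k) : R :=
  sup [set vnorm (M *m x) | x in [set x : 'cV[R]_k | vnorm x <= 1]].

Definition kappa (k : nat) (Q : 'M[R]_k) : R := specnorm Q * specnorm (invmx Q).

Definition is_lambda_max (k : nat) (M : 'M[R]_k) (l : R) : Prop :=
  eigenvalue M l /\ forall a, eigenvalue M a -> a <= l.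
Definition is_lambda_min (k : nat) (M : 'M[R]_k) (l : R) : Prop :=
  eigenvalue M l /\ forall a, eigenvalue M a -> l <= a.

(* per-sample quantities built from features x t = phi(s_t), x' t = phi(s_{t+1}) *)
Definition Ahat_t (d : nat) (disc : R) (x x' : 'cV[R]_d) : 'M[R]_d :=
  x *m (x - disc *: x')^T.
Definition bhat_t (d : nat) (r : R) (x : 'cV[R]_d) : 'cV[R]_d := r *: x.
Definition Chat_t (d : nat) (x : 'cV[R]_d) : 'M[R]_d := x *m x^T.

Definition avgM (n k : nat) (F : 'I_n -> 'M[R]_k) : 'M[R]_k :=
  (n%:R)^-1 *: \sum_(t < n) F t.
Definition avgV (n k : nat) (F : 'I_n -> 'cV[R]_k) : 'cV[R]_k :=
  (n%:R)^-1 *: \sum_(t < n) F t.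

Definition G_t (d : nat) (beta : R) (At Ct : 'M[R]_d) : 'M[R]_(d + d) :=
  block_mx 0 (- (Num.sqrt beta) *: At^T) ((Num.sqrt beta) *: At) (beta *: Ct).
Definition g_t (d : nat) (beta : R) (bt : 'cV[R]_d) : 'cV[R]_(d + d) :=
  col_mx 0 ((Num.sqrt beta) *: bt).

Definition batchM (n D : nat) (Gt : 'I_n -> 'M[R]_D) (B : nat) (S : {set 'I_n}) :=
  (B%:R)^-1 *: \sum_(t in S) Gt t.
Definition batchV (n D : nat) (gt : 'I_n -> 'cV[R]_D) (B : nat) (S : {set 'I_n}) :=
  (B%:R)^-1 *: \sum_(t in S) gt t.

Definition inner_loop (n D : nat) (Gt : 'I_n -> 'M[R]_D) (Gm : 'M[R]_D)
  (gm : 'cV[R]_D) (sigma : R) (zm : 'cV[R]_D) (ts : seq 'I_n) : 'cV[R]_D :=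
  foldl (fun zj tj => zj - sigma *: (Gt tj *m zj + (Gm - Gt tj) *m zm - gm)) zm ts.

(* Expectation of f(z_m) for SCSG started at the deterministic point z0.
   Randomness of an epoch: batch S uniform among B-subsets of [n] (prob 1/C(n,B)),
   K ~ Geom(B/(B+1)), P(K = k) = (1 - gam) gam^k, and t_0..t_{k-1} i.i.d. uniform
   on [n] (prob n^-k for each k-tuple).  Epochs are independent, so
   E[f(z_{m+1}) | z_0 = z] = E_{epoch}[ E[f(z_m) | z_0 = z_1] ]
   (Tonelli on the discrete product space). *)
Fixpoint scsg_expect (n D : nat) (Gt : 'I_n -> 'M[R]_D) (gt : 'I_n -> 'cV[R]_D)
  (B : nat) (sigma : R) (f : 'cV[R]_D -> R) (m : nat) (z : 'cV[R]_D) : \bar R :=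
  match m with
  | 0 => (f z)%:E
  | m'.+1 =>
    let gam : R := B%:R / (B.+1)%:R in
    (\sum_(S : {set 'I_n} | #|S| == B)
      ((('C(n, B))%:R)^-1)%:E *
      \sum_(0 <= k <oo)
        (((1 - gam) * gam ^+ k)%:E *
         \sum_(ts : k.-tuple 'I_n)
           ((n%:R ^- k)%:E *
            scsg_expect Gt gt B sigma f m'
              (inner_loop Gt (batchM Gt B S) (batchV gt B S) sigma z ts))))%E
  end.

End SCSGdefs.

From HB Require Import structures.
From mathcomp Require Import all_boot all_order all_algebra.
From mathcomp Require Import boolp classical_sets reals ereal sequences.
From mathcomp Require Import ring lra.
Import Order.TTheory GRing.Theory Num.Theory.
Local Open Scope ring_scope.

Set Implicit Arguments. Unset Strict Implicit.

(* In the coordinates u = Q^-1 (z - zstar), an inner SCSG step is a random affine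
   map whose mean drift Q^-1 G Q = Lam is coercive with constant lambda_min and
   whose mean-square gain is at most kappa(Q)^2 L_G^2.  Under the step-size
   bound one step therefore shrinks E|u|^2 by the factor
   1 / (1 + 2 sigma lambda_min / 3), up to a noise term that is quadratic in the
   epoch's anchor z_m.  Iterating, E|u|^2 after any number K of inner steps is
   bounded by an affine function of |u_m|^2 independent of K, so the geometric
   mixture over K is finite, and induction over the epochs concludes. *)

Section Euclid.
Variables (R : realType) (D : nat).
Implicit Types (x y z : 'cV[R]_D) (M : 'M[R]_D).

Definition dot x y : R := \sum_(i < D) x i 0 * y i 0.
Definition sqnorm x : R := dot x x.

Lemma dotC x y : dot x y = dot y x.
Proof. by apply: eq_bigr => i _; rewrite mulrC. Qed.

Lemma dot0l y : dot 0 y = 0.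
Proof. by rewrite /dot big1 // => i _; rewrite mxE mul0r. Qed.

Lemma dotDr x y z : dot x (y + z) = dot x y + dot x z.
Proof. by rewrite /dot -big_split; apply: eq_bigr => i _; rewrite mxE mulrDr. Qed.

Lemma dotZr a x y : dot x (a *: y) = a * dot x y.
Proof. by rewrite /dot mulr_sumr; apply: eq_bigr => i _; rewrite mxE mulrCA. Qed.

Lemma dotNr x y : dot x (- y) = - dot x y.
Proof. by rewrite -scaleN1r dotZr mulN1r. Qed.

Lemma dot_sumr (I : finType) x (F : I -> 'cV[R]_D) :
  dot x (\sum_t F t) = \sum_t dot x (F t).
Proof. by rewrite /dot exchange_big; apply: eq_bigr => i _; rewrite summxE mulr_sumr. Qed.

Lemma dot_trmx x y : dot x y = (x^T *m y) 0 0.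
Proof. by rewrite mxE; apply: eq_bigr => i _; rewrite mxE. Qed.

Lemma sqnorm_mulmx M x : sqnorm (M *m x) = dot x (M^T *m M *m x).
Proof. by rewrite /sqnorm !dot_trmx trmx_mul !mulmxA. Qed.

Lemma sqnorm_ge0 x : 0 <= sqnorm x.
Proof. by apply: sumr_ge0 => i _; rewrite -expr2 sqr_ge0. Qed.

Lemma sqnorm_eq0 x : sqnorm x = 0 -> x = 0.
Proof.
move=> /eqP; rewrite psumr_eq0 => [/allP x0|i _]; last by rewrite -expr2 sqr_ge0.
apply/matrixP => i j; rewrite (ord1 j) mxE.
by have /implyP/(_ isT) := x0 i (mem_index_enum i); rewrite mulf_eq0 orbb => /eqP.
Qed.

Lemma sqnormZ a x : sqnorm (a *: x) = a ^+ 2 * sqnorm x.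
Proof. by rewrite /sqnorm /dot mulr_sumr; apply: eq_bigr => i _; rewrite !mxE; ring. Qed.

Lemma sqnormN x : sqnorm (- x) = sqnorm x.
Proof. by rewrite -scaleN1r sqnormZ sqrrN expr1n mul1r. Qed.

Lemma sqnormB_scale x a y :
  sqnorm (x - a *: y) = sqnorm x - 2 * a * dot x y + a ^+ 2 * sqnorm y.
Proof.
rewrite /sqnorm /dot !mulr_sumr -sumrN -!big_split /=; apply: eq_bigr => i _.
by rewrite !mxE; ring.
Qed.

Lemma sqnormD_le x y : sqnorm (x + y) <= 2 * sqnorm x + 2 * sqnorm y.
Proof.
rewrite /sqnorm /dot !mulr_sumr -big_split /=; apply: ler_sum => i _.
by rewrite mxE; have := sqr_ge0 (x i 0 - y i 0); nra.
Qed.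

Lemma dot_le_young x y e : 0 < e -> 2 * dot x y <= e * sqnorm x + sqnorm y / e.
Proof.
move=> e0; rewrite /sqnorm /dot mulr_sumr [e * _]mulr_sumr mulr_suml -big_split.
apply: ler_sum => i _; rewrite -subr_ge0.
have -> : e * (x i 0 * x i 0) + y i 0 * y i 0 / e - 2 * (x i 0 * y i 0)
    = (e * x i 0 - y i 0) ^+ 2 / e by field; rewrite gt_eqF.
by rewrite divr_ge0 ?sqr_ge0 ?ltW.
Qed.

Lemma vnorm_sqnorm x : vnorm x ^+ 2 = sqnorm x.
Proof.
rewrite /vnorm sqr_sqrtr; last by apply: sumr_ge0 => i _; rewrite sqr_ge0.
by apply: eq_bigr => i _; rewrite expr2.
Qed.

Lemma vnorm_ge0 x : 0 <= vnorm x.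
Proof. exact: sqrtr_ge0. Qed.

Lemma vnorm0 : vnorm (0 : 'cV[R]_D) = 0.
Proof. by rewrite /vnorm big1 ?sqrtr0 // => i _; rewrite mxE expr0n. Qed.

Lemma vnorm_eq0 x : vnorm x = 0 -> x = 0.
Proof. by move=> x0; apply: sqnorm_eq0; rewrite -vnorm_sqnorm x0 expr0n. Qed.

Lemma vnorm_gt0 x : x != 0 -> 0 < vnorm x.
Proof.
by move=> nx0; rewrite lt_def vnorm_ge0 andbT; apply: contra nx0 => /eqP/vnorm_eq0->.
Qed.

Lemma vnormZ a x : vnorm (a *: x) = `|a| * vnorm x.
Proof.
have sqrt_sqnorm y : Num.sqrt (sqnorm y) = vnorm y.
  by rewrite -vnorm_sqnorm sqrtr_sqr ger0_norm ?vnorm_ge0.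
by rewrite -sqrt_sqnorm sqnormZ sqrtrM ?sqr_ge0 // sqrtr_sqr sqrt_sqnorm.
Qed.

Lemma dot_le_vnorm x y : dot x y <= vnorm x * vnorm y.
Proof.
have [->|nx0] := eqVneq x 0; first by rewrite dot0l vnorm0 mul0r.
have [->|ny0] := eqVneq y 0; first by rewrite dotC dot0l vnorm0 mulr0.
have [px py] := (vnorm_gt0 nx0, vnorm_gt0 ny0).
have := dot_le_young x y (divr_gt0 py px); rewrite -!vnorm_sqnorm.
have -> : vnorm y / vnorm x * vnorm x ^+ 2 + vnorm y ^+ 2 / (vnorm y / vnorm x)
    = 2 * (vnorm x * vnorm y) by field; rewrite !gt_eqF.
by rewrite ler_pM2l.
Qed.

End Euclid.

Section SpectralNorm.
Variables (R : realType) (D : nat).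
Implicit Types (x e : 'cV[R]_D) (M : 'M[R]_D).

(* [specnorm] is a [sup]; this crude bound shows that its set is bounded. *)
Definition entry_bound M : R := \sum_(i < D) (\sum_(j < D) `|M i j|) ^+ 2.

Lemma entry_bound_ge0 M : 0 <= entry_bound M.
Proof. by apply: sumr_ge0 => i _; rewrite sqr_ge0. Qed.

Lemma normr_entry_le x j : `|x j 0| <= vnorm x.
Proof.
rewrite -sqrtr_sqr ler_wsqrtr // (bigD1 j) //= lerDl.
by apply: sumr_ge0 => i _; rewrite sqr_ge0.
Qed.

Lemma sqnorm_mulmx_entry_bound M x : sqnorm (M *m x) <= entry_bound M * sqnorm x.
Proof.
rewrite {1}/sqnorm /dot /entry_bound mulr_suml; apply: ler_sum => i _.
have row_le : `|(M *m x) i 0| <= (\sum_j `|M i j|) * vnorm x.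
  rewrite mxE (le_trans (ler_norm_sum _ _ _)) // mulr_suml.
  by apply: ler_sum => j _; rewrite normrM ler_wpM2l ?normr_entry_le.
rewrite -expr2 -real_normK ?num_real // -vnorm_sqnorm -exprMn.
by rewrite lerXn2r ?nnegrE ?normr_ge0 ?mulr_ge0 ?sumr_ge0 ?vnorm_ge0.
Qed.

Local Open Scope classical_set_scope.

Lemma specnorm_ub M x : vnorm x <= 1 -> vnorm (M *m x) <= specnorm M.
Proof.
move=> x1; apply: sup_upper_bound; last by exists x.
split; first by exists (vnorm (M *m x)), x.
exists (1 + entry_bound M) => _ [y y1 <-].
have : vnorm (M *m y) ^+ 2 <= entry_bound M.
  rewrite vnorm_sqnorm (le_trans (sqnorm_mulmx_entry_bound _ _)) //.
  by rewrite ler_piMr ?entry_bound_ge0 // -vnorm_sqnorm expr_le1 ?vnorm_ge0.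
by have := vnorm_ge0 (M *m y); nra.
Qed.

Local Close Scope classical_set_scope.

Lemma specnorm_ge0 M : 0 <= specnorm M.
Proof. by have := @specnorm_ub M 0; rewrite mulmx0 vnorm0; apply. Qed.

Lemma vnorm_mulmx_le M x : vnorm (M *m x) <= specnorm M * vnorm x.
Proof.
have [->|nx0] := eqVneq x 0; first by rewrite mulmx0 vnorm0 mulr0.
have px := vnorm_gt0 nx0.
have := @specnorm_ub M ((vnorm x)^-1 *: x).
rewrite -scalemxAr !vnormZ ger0_norm ?invr_ge0 ?vnorm_ge0 // mulVf ?gt_eqF // lexx.
by move=> /(_ isT); rewrite ler_pdivrMl // mulrC.
Qed.

Lemma sqnorm_mulmx_le M x : sqnorm (M *m x) <= specnorm M ^+ 2 * sqnorm x.
Proof.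
by rewrite -!vnorm_sqnorm -exprMn lerXn2r ?vnorm_mulmx_le
  ?nnegrE ?mulr_ge0 ?specnorm_ge0 ?vnorm_ge0.
Qed.

Lemma dot_mulmx_le M x : dot x (M *m x) <= specnorm M * sqnorm x.
Proof.
rewrite (le_trans (dot_le_vnorm _ _)) // -vnorm_sqnorm expr2 mulrCA.
by rewrite ler_wpM2l ?vnorm_ge0 ?vnorm_mulmx_le.
Qed.

Lemma sqnorm_affine_le M x e :
  sqnorm (M *m x + e) <= 2 * specnorm M ^+ 2 * sqnorm x + 2 * sqnorm e.
Proof.
by rewrite (le_trans (sqnormD_le _ _)) // lerD2r -mulrA ler_pM2l ?sqnorm_mulmx_le.
Qed.

End SpectralNorm.

Section Diagonalizable.
Variables (R : realType) (D : nat).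

Lemma eigenvalue_conj_diag (Q Lam : 'M[R]_D) i :
  Q \in unitmx -> is_diag_mx Lam -> eigenvalue (Q *m Lam *m invmx Q) (Lam i i).
Proof.
move=> uQ /is_diag_mxP Lam_diag; apply/eigenvalueP.
exists (delta_mx 0 i *m invmx Q); last first.
  apply: contraTneq isT => /(congr1 (mulmx^~ Q)); rewrite /= mulmxKV // mul0mx.
  by move=> /matrixP/(_ 0 i); rewrite !mxE !eqxx /= => /eqP; rewrite oner_eq0.
rewrite !mulmxA mulmxKV // scalemxAl; congr (_ *m _).
apply/matrixP => a j; rewrite (ord1 a) !mxE (bigD1 i) //= big1 => [|k ki].
  rewrite !mxE !eqxx mul1r addr0; have [->|ji] := eqVneq j i; first by rewrite mulr1.
  by rewrite Lam_diag ?mulr0 // eq_sym.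
by rewrite !mxE (negbTE ki) andbF mul0r.
Qed.

Lemma dot_diag_ge (Lam : 'M[R]_D) lam x :
  is_diag_mx Lam -> (forall i, lam <= Lam i i) -> lam * sqnorm x <= dot x (Lam *m x).
Proof.
move=> /is_diag_mxP Lam_diag lam_le; rewrite /sqnorm /dot mulr_sumr.
apply: ler_sum => i _; rewrite mxE (bigD1 i) //= big1 ?addr0 => [|k ki]; last first.
  by rewrite Lam_diag ?mul0r // eq_sym.
by rewrite !(mulrCA (x i 0)) ler_wpM2r ?lam_le // -expr2 sqr_ge0.
Qed.

End Diagonalizable.

Section Means.
Variables (R : realType) (n D : nat).
Hypothesis n_gt0 : (0 < n)%N.

Definition mean (F : 'I_n -> R) : R := n%:R^-1 * \sum_t F t.

Definition tuple_mean k (F : k.-tuple 'I_n -> R) : R :=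
  \sum_(ts : k.-tuple 'I_n) n%:R ^- k * F ts.

Lemma mean_const c : mean (fun _ => c) = c.
Proof.
rewrite /mean sumr_const card_ord -[c *+ n]mulr_natl mulrA mulVf ?mul1r //.
by rewrite pnatr_eq0 -lt0n.
Qed.

Lemma eq_mean F G : (forall t, F t = G t) -> mean F = mean G.
Proof. by move=> FG; rewrite /mean (eq_bigr _ (fun t _ => FG t)). Qed.

Lemma meanD F G : mean (fun t => F t + G t) = mean F + mean G.
Proof. by rewrite /mean big_split mulrDr. Qed.

Lemma meanZ a F : mean (fun t => a * F t) = a * mean F.
Proof. by rewrite /mean -mulr_sumr mulrCA. Qed.

Lemma ler_mean F G : (forall t, F t <= G t) -> mean F <= mean G.
Proof. by move=> FG; rewrite ler_wpM2l ?invr_ge0 ?ler0n // ler_sum. Qed.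

Lemma mean_ge0 F : (forall t, 0 <= F t) -> 0 <= mean F.
Proof. by move=> F_ge0; rewrite mulr_ge0 ?invr_ge0 ?sumr_ge0. Qed.

Lemma mean_dot (u : 'cV[R]_D) w : mean (fun t => dot u (w t)) = dot u (avgV w).
Proof. by rewrite /avgV dotZr dot_sumr. Qed.

Lemma mean_dot_mulmx (F : 'I_n -> 'M[R]_D) y :
  mean (fun t => dot y (F t *m y)) = dot y (avgM F *m y).
Proof. by rewrite /avgM -scalemxAl mulmx_suml dotZr dot_sumr. Qed.

Lemma avgV_const (e : 'cV[R]_D) : avgV (fun _ : 'I_n => e) = e.
Proof.
rewrite /avgV sumr_const card_ord -scaler_nat scalerA mulVf ?scale1r //.
by rewrite pnatr_eq0 -lt0n.
Qed.

Lemma avgV_affine (H : 'I_n -> 'M[R]_D) v u :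
  avgV (fun t => H t *m u + v t) = avgM H *m u + avgV v.
Proof. by rewrite /avgV /avgM big_split scalerDr -scalemxAl mulmx_suml. Qed.

Lemma avgM_conj (P Q : 'M[R]_D) (F : 'I_n -> 'M[R]_D) :
  avgM (fun t => P *m F t *m Q) = P *m avgM F *m Q.
Proof. by rewrite /avgM -mulmx_suml -mulmx_sumr scalemxAl scalemxAr. Qed.

Lemma mean_sqnorm_conj_le (P Q : 'M[R]_D) (F : 'I_n -> 'M[R]_D) x :
  mean (fun t => sqnorm (P *m F t *m Q *m x)) <=
  (specnorm P * specnorm Q) ^+ 2 * specnorm (avgM (fun t => (F t)^T *m F t)) * sqnorm x.
Proof.
set y := Q *m x; set L := specnorm (avgM _).
have step t : sqnorm (P *m F t *m Q *m x) <= specnorm P ^+ 2 * dot y ((F t)^T *m F t *m y).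
  by rewrite -sqnorm_mulmx -!mulmxA sqnorm_mulmx_le.
apply: le_trans (ler_mean step) _; rewrite meanZ mean_dot_mulmx.
have avg_le : dot y (avgM (fun t => (F t)^T *m F t) *m y) <= L * (specnorm Q ^+ 2 * sqnorm x).
  apply: le_trans (dot_mulmx_le _ _) _.
  by rewrite ler_wpM2l ?specnorm_ge0 ?sqnorm_mulmx_le.
rewrite [leRHS](_ : _ = specnorm P ^+ 2 * (L * (specnorm Q ^+ 2 * sqnorm x))).
  by rewrite ler_wpM2l ?exprn_ge0 ?specnorm_ge0.
by rewrite /L; ring.
Qed.

Lemma tuple_mean0 (F : 0.-tuple 'I_n -> R) : tuple_mean F = F [tuple].
Proof.
rewrite /tuple_mean (big_pred1 [tuple]) ?expr0 ?invr1 ?mul1r // => ts.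
by apply/esym/eqP; exact: tuple0.
Qed.

Lemma tuple_meanS k (F : k.+1.-tuple 'I_n -> R) :
  tuple_mean F = mean (fun t => tuple_mean (fun ts => F (cons_tuple t ts))).
Proof.
rewrite /tuple_mean /mean mulr_sumr.
under [RHS]eq_bigr do rewrite mulr_sumr.
rewrite pair_big (reindex (fun p : 'I_n * k.-tuple 'I_n => cons_tuple p.1 p.2)) /=.
  by apply: eq_bigr => -[t ts] _; rewrite exprS invfM mulrA.
exists (fun ts : k.+1.-tuple 'I_n => (thead ts, behead_tuple ts)).
  by move=> [t ts] _ /=; rewrite theadE; congr pair; apply: val_inj.
by move=> ts _; rewrite [RHS]tuple_eta; apply: val_inj.
Qed.

Lemma tuple_mean_const k c : tuple_mean (fun _ : k.-tuple 'I_n => c) = c.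
Proof. by elim: k => [|k IHk]; rewrite ?tuple_mean0 // tuple_meanS IHk mean_const. Qed.

End Means.

Section StochasticStep.
Variables (R : realType) (n D : nat).
Hypothesis n_gt0 : (0 < n)%N.
Implicit Types (u : 'cV[R]_D) (w v : 'I_n -> 'cV[R]_D).

Lemma mean_sqnorm_sub_scale u s w :
  mean (fun t => sqnorm (u - s *: w t)) =
  sqnorm u - 2 * s * dot u (avgV w) + s ^+ 2 * mean (fun t => sqnorm (w t)).
Proof.
rewrite -mean_dot // /mean (eq_bigr _ (fun t _ => sqnormB_scale _ _ _)).
rewrite !big_split /= sumr_const card_ord sumrN -!mulr_sumr -[sqnorm u *+ n]mulr_natl.
by field; rewrite pnatr_eq0 -lt0n.
Qed.

Lemma mean_sqnorm_step_le (H : 'I_n -> 'M[R]_D) v u s lam K :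
  0 < s -> 0 < lam -> 6 * s * K <= lam ->
  (forall x, lam * sqnorm x <= dot x (avgM H *m x)) ->
  (forall x, mean (fun t => sqnorm (H t *m x)) <= K * sqnorm x) ->
  mean (fun t => sqnorm (u - s *: (H t *m u + v t))) <=
  (1 - 2 * s * lam / 3) * sqnorm u +
  (s / lam * sqnorm (avgV v) + 2 * s ^+ 2 * mean (fun t => sqnorm (v t))).
Proof.
move=> s_gt0 lam_gt0 sK_le coercive second_moment.
rewrite mean_sqnorm_sub_scale avgV_affine // dotDr.
have noisy_le : mean (fun t => sqnorm (H t *m u + v t)) <=
    2 * (K * sqnorm u) + 2 * mean (fun t => sqnorm (v t)).
  apply: le_trans (ler_mean (fun t => sqnormD_le _ _)) _.
  by rewrite meanD !meanZ lerD2r ler_pM2l ?second_moment.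
have drift_ge := coercive u.
have young := dot_le_young u (- avgV v) lam_gt0; rewrite dotNr sqnormN in young.
(* Young's inequality uses up half of the drift [2 s lam |u|^2]; the step-size
   condition bounds the variance [2 s^2 K |u|^2] by a third of the rest. *)
have var_le : s * (6 * s * K) * sqnorm u <= s * lam * sqnorm u.
  by rewrite ler_wpM2r ?sqnorm_ge0 // ler_wpM2l // ltW.
move: noisy_le drift_ge young var_le.
set q := sqnorm u; set dl := dot u _; set dv := dot u _; set mw := mean _; set mv := mean _.
set sv := sqnorm _ => noisy_le drift_ge young var_le.
have q_ge0 : 0 <= q := sqnorm_ge0 u.
have s2 : s ^+ 2 = s * s by rewrite expr2.
have svl : s / lam * sv = s * (sv / lam) by rewrite mulrAC mulrA.
rewrite s2 svl; nra.
Qed.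

Lemma tuple_mean_foldl_le (X : Type) (st : X -> 'I_n -> X) (V : X -> R) rho M :
  0 <= rho <= 1 -> 0 <= M -> (forall z, 0 <= V z) ->
  (forall z, mean (fun t => V (st z t)) <= rho * V z + (1 - rho) * M) ->
  forall k z, tuple_mean (fun ts : k.-tuple 'I_n => V (foldl st z ts)) <= V z + M.
Proof.
move=> /andP[rho_ge0 rho_le1] M_ge0 V_ge0 st_le k z.
suff : tuple_mean (fun ts : k.-tuple 'I_n => V (foldl st z ts)) <=
    rho ^+ k * V z + (1 - rho ^+ k) * M.
  have := exprn_ge0 k rho_ge0; have := exprn_ile1 k rho_ge0 rho_le1.
  by have := V_ge0 z; nra.
elim: k z => [|k IHk] z; first by rewrite tuple_mean0 expr0 mul1r subrr mul0r addr0.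
rewrite tuple_meanS //=; apply: le_trans (ler_mean (fun t => IHk (st z t))) _.
rewrite meanD // meanZ mean_const //.
have := ler_wpM2l (exprn_ge0 k rho_ge0) (st_le z).
by rewrite exprSr; nra.
Qed.

End StochasticStep.

Section GeometricMixture.
Variable R : realType.
Local Open Scope ereal_scope.

Lemma geom_weight_ge0 (g : R) k : (0 <= g <= 1)%R -> (0 <= (1 - g) * g ^+ k)%R.
Proof. by move=> /andP[g0 g1]; rewrite mulr_ge0 ?exprn_ge0 ?subr_ge0. Qed.

Lemma nneseries_geom_mix_le (g Y : R) (T : nat -> \bar R) : (0 <= g < 1)%R ->
  (forall k, 0 <= T k) -> (forall k, T k <= Y%:E) ->
  \sum_(0 <= k <oo) ((1 - g) * g ^+ k)%:E * T k <= Y%:E.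
Proof.
move=> /andP[g0 g1] T_ge0 T_le.
have w_ge0 k : (0 <= (1 - g) * g ^+ k)%R by rewrite geom_weight_ge0 ?g0 ?ltW.
have Y_ge0 : (0 <= Y)%R by rewrite -lee_fin (le_trans (T_ge0 0%N)).
have /ereal_nondecreasing_series/ereal_nondecreasing_cvgn/cvg_lim -> // :
    forall k, (0 <= k)%N -> true -> 0 <= ((1 - g) * g ^+ k)%:E * T k.
  by move=> k _ _; rewrite mule_ge0 ?lee_fin.
apply: ge_ereal_sup => _ [N _ <-] /=.
apply: (@le_trans _ _ (\sum_(0 <= k < N) (((1 - g) * g ^+ k) * Y)%:E)).
  by apply: lee_sum => k _; rewrite [leRHS]EFinM lee_wpmul2l ?lee_fin.
have partial_sum N' : (\sum_(0 <= k < N') (1 - g) * g ^+ k = 1 - g ^+ N')%R.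
  elim: N' => [|N' IHN]; first by rewrite big_geq // expr0 subrr.
  by rewrite big_nat_recr //= IHN exprSr; ring.
rewrite sumEFin lee_fin -mulr_suml partial_sum.
by have := exprn_ge0 N g0; nra.
Qed.

End GeometricMixture.

Section Expectation.
Variables (R : realType) (n D B : nat) (Gt : 'I_n -> 'M[R]_D) (gt : 'I_n -> 'cV[R]_D).
Variables (s : R) (f : 'cV[R]_D -> R).
Hypotheses (n_gt0 : (0 < n)%N) (f_ge0 : forall z, 0 <= f z).
Local Open Scope ereal_scope.

Let epoch_map (S : {set 'I_n}) k (z : 'cV[R]_D) (ts : k.-tuple 'I_n) :=
  inner_loop Gt (batchM Gt B S) (batchV gt B S) s z ts.

Lemma geom_ratio_ge0_lt1 : (0 <= (B%:R / B.+1%:R : R) < 1)%R.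
Proof. by rewrite divr_ge0 //= ltr_pdivrMr ?ltr0n // mul1r ltr_nat. Qed.

Lemma scsg_expect_ge0 m z : 0 <= scsg_expect Gt gt B s f m z.
Proof.
elim: m z => [|m IHm] z /=; first by rewrite lee_fin.
apply: sume_ge0 => S _; rewrite mule_ge0 ?lee_fin ?invr_ge0 //.
apply: nneseries_ge0 => k _ _; have /andP[g0 g1] := geom_ratio_ge0_lt1.
rewrite mule_ge0 ?lee_fin ?geom_weight_ge0 ?g0 ?(ltW g1) //.
by apply: sume_ge0 => ts _; rewrite mule_ge0 ?lee_fin ?invr_ge0 ?exprn_ge0.
Qed.

Lemma scsg_expect_le :
  (forall S : {set 'I_n}, exists al be : R, (0 <= al)%R /\ forall zm k,
     (tuple_mean (fun ts : k.-tuple 'I_n => f (epoch_map S zm ts)) <= al * f zm + be)%R) ->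
  forall m, exists a b : R, (0 <= a)%R /\
    forall z, scsg_expect Gt gt B s f m z <= (a * f z + b)%:E.
Proof.
move=> /choice[al /choice[be epoch_le]]; elim=> [|m [a [b [a_ge0 IHm]]]].
  by exists 1%R, 0%R; split=> // z; rewrite mul1r addr0.
pose p : R := ('C(n, B)%:R^-1)%R.
have p_ge0 : (0 <= p)%R by rewrite invr_ge0.
exists (\sum_(S : {set 'I_n} | #|S| == B) p * (a * al S))%R.
exists (\sum_(S : {set 'I_n} | #|S| == B) p * (a * be S + b))%R.
split=> [|z]; first by apply: sumr_ge0 => S _; rewrite !mulr_ge0 ?(epoch_le S).1.
have -> : ((\sum_(S : {set 'I_n} | #|S| == B) p * (a * al S)) * f z +
    \sum_(S : {set 'I_n} | #|S| == B) p * (a * be S + b) =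
    \sum_(S : {set 'I_n} | #|S| == B) p * (a * (al S * f z + be S) + b))%R.
  by rewrite mulr_suml -big_split; apply: eq_bigr => S _ /=; ring.
rewrite /= -sumEFin; apply: lee_sum => S _; rewrite EFinM lee_wpmul2l ?lee_fin //.
apply: nneseries_geom_mix_le geom_ratio_ge0_lt1 _ _ => k.
  by apply: sume_ge0 => ts _; rewrite mule_ge0 ?lee_fin ?invr_ge0 ?exprn_ge0 ?scsg_expect_ge0.
apply: (@le_trans _ _ (\sum_(ts : k.-tuple 'I_n)
    (n%:R ^- k * (a * f (epoch_map S z ts) + b))%:E)).
  by apply: lee_sum => ts _; rewrite EFinM lee_wpmul2l ?lee_fin ?invr_ge0 ?exprn_ge0.
rewrite sumEFin lee_fin.
have -> : (\sum_(ts : k.-tuple 'I_n) n%:R ^- k * (a * f (epoch_map S z ts) + b) =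
    a * tuple_mean (fun ts : k.-tuple 'I_n => f (epoch_map S z ts)) + b)%R.
  rewrite -[in RHS](tuple_mean_const n_gt0 k b) /tuple_mean mulr_sumr -big_split.
  by apply: eq_bigr => ts _ /=; ring.
by rewrite lerD2r ler_wpM2l ?(epoch_le S).2.
Qed.

End Expectation.

Section InnerLoop.
Variables (R : realType) (n D : nat) (Gt : 'I_n -> 'M[R]_D) (Q : 'M[R]_D) (zs : 'cV[R]_D).
Hypotheses (n_gt0 : (0 < n)%N) (Q_unit : Q \in unitmx).

Local Notation Qi := (invmx Q).
Local Notation conjQ M := (Qi *m M *m Q).

Lemma inner_loop_step_conj (Gm : 'M[R]_D) gm s zm z t :
  Qi *m (z - s *: (Gt t *m z + (Gm - Gt t) *m zm - gm) - zs) =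
  Qi *m (z - zs) - s *: (conjQ (Gt t) *m (Qi *m (z - zs)) +
    (conjQ (Gm - Gt t) *m (Qi *m (zm - zs)) + Qi *m (Gm *m zs - gm))).
Proof.
have QQi X : Q *m (Qi *m X) = X :> 'cV[R]_D by rewrite mulmxA mulmxV ?mul1mx.
rewrite -!mulmxA !QQi -!mulmxDr scalemxAr -mulmxBr; congr (_ *m _).
rewrite !mulmxBr !mulmxBl; apply/matrixP => i j; rewrite !mxE; ring.
Qed.

Lemma inner_loop0 (Gm : 'M[R]_D) gm zm (ts : seq 'I_n) : inner_loop Gt Gm gm 0 zm ts = zm.
Proof.
rewrite /inner_loop; move: {2 3}zm; elim: ts => //= t ts IHts z.
by rewrite scale0r subr0 IHts.
Qed.

Lemma sqnorm_noise_le (P : 'I_n -> 'M[R]_D) e s lam : 0 <= s -> 0 <= lam ->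
  exists al be : R, 0 <= al /\ forall x,
  s / lam * sqnorm (avgV (fun t => P t *m x + e)) +
  2 * s ^+ 2 * mean (fun t => sqnorm (P t *m x + e)) <= al * sqnorm x + be.
Proof.
move=> s_ge0 lam_ge0; have sl_ge0 : 0 <= s / lam by rewrite divr_ge0.
pose mP := mean (fun t => 2 * specnorm (P t) ^+ 2).
exists (s / lam * (2 * specnorm (avgM P) ^+ 2) + 2 * s ^+ 2 * mP).
exists (s / lam * (2 * sqnorm e) + 2 * s ^+ 2 * (2 * sqnorm e)).
have mP_ge0 : 0 <= mP.
  by apply: mean_ge0 => t; rewrite mulr_ge0 ?ler0n ?exprn_ge0 ?specnorm_ge0.
split=> [|x].
  by apply: addr_ge0; apply: mulr_ge0 => //; rewrite mulr_ge0 ?ler0n ?exprn_ge0 ?specnorm_ge0.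
have avg_le : sqnorm (avgV (fun t => P t *m x + e)) <=
    2 * specnorm (avgM P) ^+ 2 * sqnorm x + 2 * sqnorm e.
  by rewrite avgV_affine // avgV_const // sqnorm_affine_le.
have mean_le : mean (fun t => sqnorm (P t *m x + e)) <= mP * sqnorm x + 2 * sqnorm e.
  apply: le_trans (ler_mean (fun t => sqnorm_affine_le _ _ _)) _.
  by rewrite meanD // mean_const // lerD2r /mP /mean -mulrA mulr_suml.
rewrite [leRHS](_ : _ = s / lam * (2 * specnorm (avgM P) ^+ 2 * sqnorm x + 2 * sqnorm e)
    + 2 * s ^+ 2 * (mP * sqnorm x + 2 * sqnorm e)); last by ring.
by apply: lerD; apply: ler_wpM2l; rewrite ?sl_ge0 ?mulr_ge0 ?ler0n ?exprn_ge0.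
Qed.

Lemma inner_loop_sqnorm_le (Gm : 'M[R]_D) gm s lam K :
  0 <= s -> (0 < s -> 0 < lam /\ 6 * s * K <= lam) ->
  (forall x, lam * sqnorm x <= dot x (avgM (fun t => conjQ (Gt t)) *m x)) ->
  (forall x, mean (fun t => sqnorm (conjQ (Gt t) *m x)) <= K * sqnorm x) ->
  exists al be : R, 0 <= al /\ forall zm k,
    tuple_mean (fun ts : k.-tuple 'I_n => sqnorm (Qi *m (inner_loop Gt Gm gm s zm ts - zs)))
    <= al * sqnorm (Qi *m (zm - zs)) + be.
Proof.
move=> s_ge0 step_cond coercive second_moment.
have [->|s_neq0] := eqVneq s 0.
  exists 1, 0; split=> // zm k.
  have -> : (fun ts : k.-tuple 'I_n => sqnorm (Qi *m (inner_loop Gt Gm gm 0 zm ts - zs))) =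
      fun _ => sqnorm (Qi *m (zm - zs)) by apply: funext => ts; rewrite inner_loop0.
  by rewrite tuple_mean_const // mul1r addr0.
have s_gt0 : 0 < s by rewrite lt_def s_neq0 s_ge0.
have [lam_gt0 sK_le] := step_cond s_gt0.
pose a := 2 * s * lam / 3; have a_gt0 : 0 < a by rewrite /a !mulr_gt0.
(* Unlike [1 - a], the factor [(1 + a)^-1 >= 1 - a] is always in [0, 1]. *)
pose rho := (1 + a)^-1.
have [al [be [al_ge0 noise_le]]] :=
  sqnorm_noise_le (fun t => conjQ (Gm - Gt t)) (Qi *m (Gm *m zs - gm)) s_ge0 (ltW lam_gt0).
pose gain := (1 + a) / a.
have gain_ge0 : 0 <= gain by rewrite divr_ge0 ?addr_ge0 ?ltW.
exists (1 + gain * al), (gain * be).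
split=> [|zm k]; first by apply: addr_ge0 => //; apply: mulr_ge0.
have := noise_le (Qi *m (zm - zs)); set c := (X in X <= _) => c_le.
have c_ge0 : 0 <= c.
  apply: addr_ge0; apply: mulr_ge0; rewrite ?sqnorm_ge0 ?divr_ge0 ?(ltW lam_gt0) //.
    by rewrite mulr_ge0 ?ler0n ?exprn_ge0.
  by apply: mean_ge0 => t; exact: sqnorm_ge0.
have rho_01 : 0 <= rho <= 1.
  have one_le : 1 <= 1 + a by rewrite lerDl ltW.
  by rewrite invr_ge0 (le_trans ler01 one_le) invf_le1 // (lt_le_trans ltr01 one_le).
have step_le z :
    mean (fun t => sqnorm (Qi *m (z - s *: (Gt t *m z + (Gm - Gt t) *m zm - gm) - zs)))
    <= rho * sqnorm (Qi *m (z - zs)) + (1 - rho) * (gain * c).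
  rewrite (eq_mean (fun t => congr1 (@sqnorm R D) (inner_loop_step_conj Gm gm s zm z t))).
  apply: le_trans (mean_sqnorm_step_le n_gt0 _ _ s_gt0 lam_gt0 sK_le coercive second_moment) _.
  have -> : (1 - rho) * (gain * c) = c.
    by rewrite /rho /gain; field; rewrite !gt_eqF ?ltr_wpDr ?ltW.
  rewrite -/c lerD2r ler_wpM2r ?sqnorm_ge0 // -/a -[rho]mul1r ler_pdivlMr ?ltr_wpDr ?ltW //.
  by nra.
apply: le_trans (tuple_mean_foldl_le n_gt0 rho_01 (mulr_ge0 gain_ge0 c_ge0)
  (fun z => sqnorm_ge0 (Qi *m (z - zs))) step_le k zm) _.
have := ler_wpM2l gain_ge0 c_le; lra.
Qed.

End InnerLoop.

Lemma step_size_cond (R : realFieldType) (s lam K : R) :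
  0 <= K -> s <= lam / (6 * K) -> 0 < s -> 0 < lam /\ 6 * s * K <= lam.
Proof.
move=> K_ge0 s_le s_gt0; have [K0|K_neq0] := eqVneq K 0.
  by move: s_le; rewrite K0 mulr0 invr0 mulr0 => /(lt_le_trans s_gt0); rewrite ltxx.
have K_gt0 : 0 < K by rewrite lt_def K_neq0 K_ge0.
have sK_le : 6 * s * K <= lam.
  by move: s_le; rewrite ler_pdivlMr ?mulr_gt0 ?ltr0Sn // mulrCA mulrA.
by split=> //; apply: lt_le_trans sK_le; rewrite !mulr_gt0 ?ltr0Sn.
Qed.

Unset Implicit Arguments.

Theorem lemma3 (R : realType) (State : Type) (n d B : nat) (disc : R)
  (s : nat -> State) (r : nat -> R) (phi : State -> 'cV[R]_d)
  (beta lamA lamC lamG sigma : R) (Q Lam : 'M[R]_(d + d)) (z0 : 'cV[R]_(d + d)) :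
  let At := fun t : 'I_n => Ahat_t disc (phi (s t)) (phi (s t.+1)) in
  let bt := fun t : 'I_n => bhat_t (r t) (phi (s t)) in
  let Ct := fun t : 'I_n => Chat_t (phi (s t)) in
  let A := avgM At in
  let b := avgV bt in
  let C := avgM Ct in
  let Gt := fun t : 'I_n => G_t beta (At t) (Ct t) in
  let gt := fun t : 'I_n => g_t beta (bt t) in
  let G := avgM Gt in
  let zstar : 'cV[R]_(d + d) := col_mx (invmx A *m b) 0 in
  let LG2 := specnorm (avgM (fun t : 'I_n => (Gt t)^T *m Gt t)) in
  (0 < B <= n)%N ->
  A \in unitmx ->
  (forall v : 'cV[R]_d, v != 0 -> 0 < (v^T *m C *m v) 0 0) ->
  is_lambda_max (A^T *m invmx C *m A) lamA ->
  is_lambda_min C lamC ->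
  beta = 8 * lamA / lamC ->
  Q \in unitmx -> is_diag_mx Lam -> G = Q *m Lam *m invmx Q ->
  is_lambda_min G lamG ->
  0 <= sigma -> sigma <= lamG / (6 * kappa Q ^+ 2 * LG2) ->
  forall m : nat,
    (scsg_expect Gt gt B sigma
       (fun z => (vnorm (invmx Q *m (z - zstar)) ^+ 2)%R) m z0 < +oo)%E.
Proof.
move=> At bt Ct A b C Gt gt G zstar LG2 /andP[B_gt0 B_le] _ _ _ _ _ Q_unit Lam_diag G_eq
  [_ lamG_min] sigma_ge0 sigma_le m.
have n_gt0 : (0 < n)%N := leq_trans B_gt0 B_le.
have coercive x : lamG * sqnorm x <= dot x (avgM (fun t => invmx Q *m Gt t *m Q) *m x).
  rewrite avgM_conj -/G G_eq !mulmxA mulVmx // mul1mx mulmxKV //.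
  apply: dot_diag_ge => // i; apply: lamG_min.
  by rewrite G_eq; exact: eigenvalue_conj_diag.
have second_moment x :
    mean (fun t => sqnorm (invmx Q *m Gt t *m Q *m x)) <= kappa Q ^+ 2 * LG2 * sqnorm x.
  by rewrite /kappa [specnorm Q * _]mulrC; exact: mean_sqnorm_conj_le.
rewrite -mulrA in sigma_le.
have step_cond := step_size_cond (mulr_ge0 (sqr_ge0 (kappa Q)) (specnorm_ge0 _)) sigma_le.
have -> : (fun z => vnorm (invmx Q *m (z - zstar)) ^+ 2) =
    (fun z => sqnorm (invmx Q *m (z - zstar))) by apply: funext => z; exact: vnorm_sqnorm.
have [a [c [_ expect_le]]] := scsg_expect_le n_gt0 (fun z => sqnorm_ge0 _)
  (fun S => inner_loop_sqnorm_le zstar n_gt0 Q_unit (batchM Gt B S) (batchV gt B S)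
     sigma_ge0 step_cond coercive second_moment) m.
exact: le_lt_trans (expect_le z0) (ltey _).
Qed.
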